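(* Let $G$ be a graph of order at least $3$ and maximum degree at most $3$. If $S\subseteq V(G)$ is such that $w_{(G,S)}(u)\geq 3$ for every $u\in V(G)\setminus S$, then $|S|\geq\frac{1}{4}(n(G)+6)$.
   Context: All graphs are finite, simple and undirected; $n(G)=|V(G)|$. For a graph $G$, a set $S\subseteq V(G)$, and vertices $u,v$ with $u\in S$ or $v\in S$, ${\rm dist}_{(G,S)}(u,v)$ is the minimum number of edges of a path $P$ in $G$ between $u$ and $v$ such that $S$ contains exactly one endvertex of $P$ and no internal vertex of $P$, and $\infty$ if no such path exists (so ${\rm dist}_{(G,S)}(u,u)=0$ for $u\in S$, and $\infty$ for distinct $u,v\in S$). For $u\in V(G)$, $w_{(G,S)}(u)=\sum_{v\in S}(1/2)^{{\rm dist}_{(G,S)}(u,v)-1}$ with $(1/2)^{\infty}=0$. *)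

From HB Require Import structures.
From mathcomp Require Import all_boot all_order all_algebra.
Set Implicit Arguments. Unset Strict Implicit. Unset Printing Implicit Defensive.
Import Order.TTheory GRing.Theory Num.Theory.

Definition simple_graph (T : finType) (e : rel T) : Prop :=
  symmetric e /\ irreflexive e.

Definition max_deg_le (T : finType) (e : rel T) (d : nat) : Prop :=
  forall x : T, #|[set y | e x y]| <= d.

(* The path with vertex sequence u :: p (from u to last u p) is an
   (S)-admissible path: a path in G (consecutive vertices adjacent, no
   repeated vertices) such that S contains exactly one endvertex and no
   internal vertex. For p = [::] the path is the trivial path at u, whose
   only endvertex is u. *)
Definition adm_path (T : finType) (e : rel T) (S : {set T}) (u : T) (p : seq T) : bool :=
  [&& path e u p, uniq (u :: p) &
      if p is [::] then u \in S
      else ((u \in S) != (last u p \in S)) &&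
           all (fun x => x \notin S) (behead (belast u p))].

Definition adm_len (T : finType) (e : rel T) (S : {set T}) (u v : T) (k : nat) : bool :=
  [exists p : k.-tuple T, adm_path e S u p && (last u p == v)].

(* dist_(G,S)(u,v) < infinity. Admissible paths have no repeated vertex,
   hence fewer than #|T| edges. *)
Definition dist_fin (T : finType) (e : rel T) (S : {set T}) (u v : T) : bool :=
  has (adm_len e S u v) (iota 0 #|T|).

Definition distGS (T : finType) (e : rel T) (S : {set T}) (u v : T) : nat :=
  find (adm_len e S u v) (iota 0 #|T|).

Definition weight (T : finType) (e : rel T) (S : {set T}) (u : T) : rat :=
  (\sum_(v in S)
     (if dist_fin e S u v then (2%:Q)^-1 ^ ((distGS e S u v)%:Z - 1) else 0))%R.

From HB Require Import structures.
From mathcomp Require Import all_boot all_order all_algebra.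
From mathcomp Require Import zify ring lra.
Import Order.TTheory GRing.Theory Num.Theory.

Set Implicit Arguments. Unset Strict Implicit. Unset Printing Implicit Defensive.

Lemma cardsD_add (T : finType) (A B : {set T}) :
  B \subset A -> #|A :\: B| + #|B| = #|A|.
Proof. by move=> BA; rewrite cardsDS // subnK // subset_leq_card. Qed.

Section Balls.
Variables (T : finType) (e : rel T) (S : {set T}).

Definition nbhd (X : {set T}) : {set T} := [set y | [exists x in X, e x y]].
Definition Sneighb (X : {set T}) : {set T} := nbhd X :&: S.

Definition ball (u : T) (k : nat) : {set T} :=
  iter k (fun X => X :|: (nbhd X :\: S)) [set u].
Definition prev_ball (u : T) (k : nat) : {set T} :=
  if k is k'.+1 then ball u k' else set0.
Definition layer (u : T) (k : nat) : {set T} := ball u k :\: prev_ball u k.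
Definition Sshell (u : T) (k : nat) : {set T} :=
  Sneighb (ball u k) :\: Sneighb (prev_ball u k).
Definition frontier (u : T) (k : nat) : {set T} :=
  (ball u k.+1 :\: ball u k) :|: Sshell u k.

Lemma nbhdP (X : {set T}) y : reflect (exists2 x, x \in X & e x y) (y \in nbhd X).
Proof.
rewrite inE; apply: (iffP existsP) => [[x /andP[]]|[x xX exy]]; first by exists x.
by exists x; rewrite xX.
Qed.

Lemma nbhdS (X Y : {set T}) : X \subset Y -> nbhd X \subset nbhd Y.
Proof.
move=> /subsetP XY; apply/subsetP=> y /nbhdP[x /XY xY exy].
by apply/nbhdP; exists x.
Qed.

Lemma nbhd0 : nbhd set0 = set0.
Proof. by apply/setP=> y; rewrite in_set0; apply/negbTE/nbhdP=> -[x]; rewrite inE. Qed.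

Lemma ball0 u : u \in ball u 0.
Proof. exact: set11. Qed.

Lemma ballS u k : ball u k.+1 = ball u k :|: (nbhd (ball u k) :\: S).
Proof. by []. Qed.

Lemma sub_ball u k l : k <= l -> ball u k \subset ball u l.
Proof.
move/subnK=> <-; elim: (l - k) => [|d IH]; first exact: subxx.
by rewrite addSn ballS; apply: subset_trans IH (subsetUl _ _).
Qed.

Lemma ball_subC u k : u \notin S -> ball u k \subset ~: S.
Proof.
move=> uS; elim: k => [|k IH]; first by rewrite sub1set inE.
by rewrite ballS subUset IH; apply/subsetP=> y; rewrite !inE => /andP[].
Qed.

Lemma prev_ball_sub u k : prev_ball u k \subset ball u k.
Proof. by case: k => [|k]; [exact: sub0set | exact: sub_ball]. Qed.

Lemma card_layer u k : #|layer u k| + #|prev_ball u k| = #|ball u k|.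
Proof. exact/cardsD_add/prev_ball_sub. Qed.

Lemma frontier_adj u k y : y \in frontier u k -> exists2 x, x \in layer u k & e x y.
Proof.
have outer : y \in nbhd (ball u k) -> y \notin nbhd (prev_ball u k) ->
    exists2 x, x \in layer u k & e x y.
  move=> /nbhdP[x xB exy] yP; exists x => //; rewrite inE xB andbT.
  by apply: contra yP => xP; apply/nbhdP; exists x.
rewrite in_setU in_setD ballS in_setU => /orP[/andP[yB]|].
  rewrite (negbTE yB) in_setD => /andP[yS yN]; apply: outer => //.
  case: k yB yN => [|k] yB _; first by rewrite nbhd0 in_set0.
  by apply: contra yB => yP; rewrite ballS in_setU in_setD yS yP orbT.
rewrite in_setD !in_setI => /andP[yP /andP[yN yS]].
by apply: outer; rewrite // yS andbT in yP.
Qed.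


Lemma card_frontier u k : u \notin S ->
  #|frontier u k| + #|ball u k| + #|Sneighb (prev_ball u k)| =
  #|ball u k.+1| + #|Sneighb (ball u k)|.
Proof.
move=> uS; have /subsetP BC := ball_subC k.+1 uS.
have disj : (ball u k.+1 :\: ball u k) :&: Sshell u k = set0.
  apply/setP=> y; rewrite in_set0 !in_setI !in_setD.
  apply/negbTE/negP=> /and3P[/andP[_ /BC]]; rewrite inE => yS _.
  by rewrite in_setI (negbTE yS) andbF.
have SS : Sneighb (prev_ball u k) \subset Sneighb (ball u k).
  exact/setSI/nbhdS/prev_ball_sub.
rewrite /frontier -[#|_ :|: _|]addn0 -(cards0 T) -disj cardsUI.
rewrite -(cardsID (ball u k) (ball u k.+1)) (setIidPr (sub_ball u (leqnSn k))).
rewrite -(cardsID (Sneighb (prev_ball u k)) (Sneighb (ball u k))) (setIidPr SS).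
rewrite /Sshell; lia.
Qed.

Lemma card_le_sum_nbhd (A L : {set T}) : A \subset nbhd L ->
  #|A| <= \sum_(x in L) #|[set y in A | e x y]|.
Proof.
move=> /subsetP AL; rewrite -sum1_card.
apply: (@leq_trans (\sum_(y in A) \sum_(x in L) e x y)).
  by apply: leq_sum => y /AL /nbhdP[x xL exy]; rewrite (bigD1 x) //= exy.
rewrite exchange_big; apply: leq_sum => x _; rewrite -sum1_card big_mkcond /=.
by rewrite [leqRHS]big_mkcond; apply: leq_sum => y _; rewrite inE; case: (y \in A).
Qed.

Lemma card_le_nbhd_cover (A L : {set T}) d : A \subset nbhd L ->
  (forall x, x \in L -> #|[set y in A | e x y]| <= d) -> #|A| <= #|L| * d.
Proof.
move=> AL deg; apply: leq_trans (card_le_sum_nbhd AL) _.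
by rewrite -sum_nat_const; apply: leq_sum.
Qed.

Lemma frontier_sub_nbhd u k : frontier u k \subset nbhd (layer u k).
Proof. by apply/subsetP=> y /frontier_adj[x xL exy]; apply/nbhdP; exists x. Qed.

Lemma path_ball u p x k : x \in ball u k -> path e x p ->
  all (fun y => y \notin S) p -> last x p \in ball u (k + size p).
Proof.
elim: p x k => [|y p IH] x k xB /=; first by rewrite addn0.
move=> /andP[exy pp] /andP[yS ap]; rewrite addnS -addSn; apply: IH => //.
by rewrite ballS in_setU in_setD yS; apply/orP; right; apply/nbhdP; exists x.
Qed.

Lemma adm_len_Sneighb u v d : u \notin S -> v \in S -> adm_len e S u v d ->
  0 < d /\ v \in Sneighb (ball u d.-1).
Proof.
move=> uS vS /existsP[p /andP[adm /eqP lv]].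
have := size_tuple p; move: adm lv; case: (tval p) => [|y s].
  by rewrite /adm_path /= (negbTE uS).
rewrite /adm_path; case/lastP: (y :: s) => [|q z]; first by rewrite /= eqxx.
rewrite last_rcons belast_rcons size_rcons rcons_path.
move=> /and3P[/andP[pq eqz] _ /andP[_ allq]] zv <-; split=> //=.
have := path_ball (ball0 u) pq allq; rewrite add0n => qB.
by rewrite in_setI vS andbT -zv; apply/nbhdP; exists (last u q).
Qed.

Lemma Sneighb_Sshell u v j : v \in Sneighb (ball u j) ->
  exists2 k, k <= j & v \in Sshell u k.
Proof.
elim: j => [|j IH] vN.
  by exists 0 => //; rewrite in_setD vN /Sneighb nbhd0 set0I in_set0.
have [/IH[k kj vk]|vj] := boolP (v \in Sneighb (ball u j)).
  by exists k => //; rewrite (leq_trans kj).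
by exists j.+1 => //; rewrite in_setD vN vj.
Qed.

Lemma Sshell_sub u k : Sshell u k \subset S.
Proof. by apply/subsetP=> v; rewrite in_setD => /andP[_]; rewrite in_setI => /andP[]. Qed.

Lemma card_Sshell u k :
  #|Sshell u k| + #|Sneighb (prev_ball u k)| = #|Sneighb (ball u k)|.
Proof. exact/cardsD_add/setSI/nbhdS/prev_ball_sub. Qed.

Local Open Scope ring_scope.

Definition shell_sum u K : rat :=
  \sum_(k < K.+1) #|Sshell u k|%:R * (2%:R^-1) ^+ k.

Lemma weight_le_shell_sum u : u \notin S -> weight e S u <= shell_sum u #|T|.
Proof.
move=> uS.
have -> : shell_sum u #|T| = \sum_(v in S) \sum_(k < #|T|.+1)
    (if v \in Sshell u k then (2%:R^-1) ^+ k else 0).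
  rewrite exchange_big; apply: eq_bigr => k _; rewrite -big_mkcondr /=.
  rewrite (eq_bigl (mem (Sshell u k))) ?sumr_const ?mulr_natl // => v.
  exact/andb_idl/subsetP/Sshell_sub.
apply: ler_sum => v vS; case: ifP => [fin|_]; last first.
  by apply: sumr_ge0 => k _; case: ifP => // _; apply: exprn_ge0.
set d := distGS e S u v.
have dT : (d < #|T|)%N.
  by rewrite /d /distGS -[X in (_ < X)%N](size_iota 0 #|T|) -has_find.
have ad : adm_len e S u v d by have := nth_find 0 fin; rewrite nth_iota // add0n.
have [d_gt0 /Sneighb_Sshell[k kd vk]] := adm_len_Sneighb uS vS ad.
have kT : (k < #|T|.+1)%N by rewrite ltnS (leq_trans kd) // (leq_trans (leq_pred d)) // ltnW.
rewrite (bigD1 (Ordinal kT)) //= vk -[leLHS]addr0; apply: lerD.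
  have -> : d%:Z - 1 = (d.-1)%:Z by rewrite -{1}(prednK d_gt0) intS addrAC subrr add0r.
  by rewrite -exprnP; apply: ler_wiXn2l.
by apply: sumr_ge0 => i _; case: ifP => // _; apply: exprn_ge0.
Qed.

Local Close Scope ring_scope.

Lemma ball_grow_or_fixed u k : k < #|ball u k| \/ ball u k.+1 = ball u k.
Proof.
elim: k => [|k [IH|IH]]; first by left; rewrite cards1.
- have [E|NE] := eqVneq (ball u k.+1) (ball u k); first by right; rewrite ballS E.
  left; apply: leq_ltn_trans IH (proper_card _).
  by rewrite properEneq eq_sym NE sub_ball.
- by right; rewrite ballS IH.
Qed.

Lemma ball_fixed u : ball u #|T|.+1 = ball u #|T|.
Proof.
case: (ball_grow_or_fixed u #|T|) => // big.
by have := max_card (mem (ball u #|T|)); rewrite leqNgt big.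
Qed.

Definition comp (x : T) : {set T} := ball x #|T|.

Definition edge_offS : rel T := [rel a b | [&& a \notin S, b \notin S & e a b]].

Lemma comp_self x : x \in comp x.
Proof. exact: subsetP (sub_ball x (leq0n _)) x (ball0 x). Qed.

Lemma comp_connect x : x \notin S -> comp x = [set y | connect edge_offS x y].
Proof.
move=> xS; have ball_conn k : ball x k \subset [set y | connect edge_offS x y].
  elim: k => [|k IH]; first by rewrite sub1set inE connect0.
  rewrite ballS subUset IH; apply/subsetP=> z; rewrite in_setD => /andP[zS /nbhdP[w wB ewz]].
  have wS : w \notin S by have := subsetP (ball_subC k xS) w wB; rewrite inE.
  have := subsetP IH w wB; rewrite !inE => /connect_trans; apply.
  by apply: connect1; apply/and3P.
apply/setP=> y; apply/idP/idP; first exact: subsetP (ball_conn _) y.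
have closed a b : a \in comp x -> edge_offS a b -> b \in comp x.
  move=> aC /and3P[_ bS eab]; rewrite /comp -ball_fixed ballS in_setU in_setD bS.
  by apply/orP; right; apply/nbhdP; exists a.
rewrite inE => /connectP[p pp ->]; move: (comp_self x) pp.
elim: p {1 3 4}x => [|z p IH] a aC //= /andP[eaz pz]; exact: IH (closed _ _ aC eaz) pz.
Qed.

Hypothesis e_sym : symmetric e.
Hypothesis e_deg : max_deg_le e 3.

Lemma card_adj_layer u k x : u \notin S -> x \in layer u k.+1 ->
  #|[set y in frontier u k.+1 | e x y]| <= 2.
Proof.
move=> uS; rewrite in_setD ballS in_setU => /andP[xB].
rewrite (negbTE xB) in_setD => /andP[_ /nbhdP[p pB epx]].
have pB1 : p \in ball u k.+1 by rewrite ballS in_setU pB.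
have pS : p \notin S by have := subsetP (ball_subC k.+1 uS) p pB1; rewrite inE.
have sub : [set y in frontier u k.+1 | e x y] \subset [set y | e x y] :\ p.
  apply/subsetP=> y; rewrite in_set => /andP[yF exy].
  rewrite in_setD1 in_set exy andbT; apply: contraTneq yF => ->.
  by rewrite in_setU !in_setD pB1 /= !in_setI (negbTE pS) !andbF.
apply: leq_trans (subset_leq_card sub) _.
by have := e_deg x; rewrite (cardsD1 p) inE e_sym epx.
Qed.

Lemma ball_growth u K : u \notin S ->
  #|ball u K.+1| + #|Sneighb (ball u K)| <= 2 * #|ball u K| + 2.
Proof.
move=> uS; elim: K => [|K IH].
  have := card_frontier 0 uS; rewrite /prev_ball /Sneighb nbhd0 set0I cards0 cards1.
  have : #|frontier u 0| <= #|layer u 0| * 3.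
    apply: card_le_nbhd_cover (frontier_sub_nbhd u 0) _ => x.
    rewrite in_setD in_set1 => /andP[_ /eqP->].
    by apply: leq_trans (e_deg u); apply/subset_leq_card/subsetP=> y; rewrite !inE => /andP[].
  by rewrite /layer /prev_ball setD0 cards1; lia.
have := card_frontier K.+1 uS; have := card_layer u K.+1.
have : #|frontier u K.+1| <= #|layer u K.+1| * 2.
  by apply: card_le_nbhd_cover (frontier_sub_nbhd u K.+1) _ => x; apply: card_adj_layer.
rewrite /prev_ball; lia.
Qed.

Lemma edge_offS_sym : symmetric edge_offS.
Proof. by move=> a b; rewrite /edge_offS /= e_sym andbCA. Qed.

Lemma comp_eq x y : x \notin S -> y \in comp x -> y \notin S /\ comp y = comp x.
Proof.
move=> xS yC; have yS : y \notin S.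
  by have := subsetP (ball_subC #|T| xS) y yC; rewrite inE.
split=> //; move: yC; rewrite !comp_connect // inE => xy.
apply/setP=> z; rewrite !inE; apply/idP/idP; first exact: connect_trans.
by apply: connect_trans; rewrite (sym_connect_sym edge_offS_sym).
Qed.

Definition Sdeg (y : T) : nat := #|[set v in S | e y v]|.

Lemma card_Sneighb_le_sum X : #|Sneighb X| <= \sum_(y in X) Sdeg y.
Proof.
apply: leq_trans (card_le_sum_nbhd (subsetIl _ S)) _.
apply: leq_sum => y _; apply/subset_leq_card/subsetP=> v.
by rewrite !inE => /andP[/andP[_ ->] ->].
Qed.

Lemma sum_Sdeg_le : \sum_(y in ~: S) Sdeg y <= #|S| * 3.
Proof.
have Sdeg_sum y : Sdeg y = \sum_(v in S) e y v.
  by rewrite /Sdeg -sum1dep_card big_mkcondr; apply: eq_bigr => v _; case: (e y v).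
under eq_bigr do rewrite Sdeg_sum.
rewrite exchange_big -sum_nat_const; apply: leq_sum => v _.
apply: leq_trans (e_deg v); rewrite -sum1_card big_mkcond [leqRHS]big_mkcond.
by apply: leq_sum => y _; rewrite !inE e_sym; case: (y \in S); case: (e v y).
Qed.

Local Open Scope ring_scope.

Definition potential u K : rat :=
  shell_sum u K + (2 + #|ball u K|%:R - #|Sneighb (ball u K)|%:R) * (2%:R^-1) ^+ K.

Lemma potential_le3 u K : u \notin S -> potential u K <= 3.
Proof.
move=> uS; elim: K => [|K IH].
  have := card_Sshell u 0; rewrite /prev_ball /Sneighb nbhd0 set0I cards0 addn0 => c0.
  rewrite /potential /shell_sum big_ord1 expr0 !mulr1 c0 cards1; lra.
apply: le_trans IH; rewrite /potential /shell_sum big_ord_recr /=.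
have := card_Sshell u K.+1; have := ball_growth K uS; rewrite /prev_ball.
rewrite -!(ler_nat rat) => + /(congr1 (fun n => n%:R : rat)); rewrite !natrD => grow.
set h := (2%:R^-1 : rat) ^+ K.+1; have h_ge0 : 0 <= h by apply: exprn_ge0.
have -> : (2%:R^-1 : rat) ^+ K = 2 * h by rewrite /h exprS mulrA divff ?mul1r.
rewrite -/(shell_sum u K) => shell; nra.
Qed.

Lemma card_Sneighb_ball u : u \notin S -> 3 <= weight e S u ->
  (#|ball u #|T| | + 2 <= #|Sneighb (ball u #|T|)|)%N.
Proof.
move=> uS w3; have := potential_le3 #|T| uS.
have := le_trans w3 (weight_le_shell_sum uS); rewrite /potential.
have h_gt0 : 0 < (2%:R^-1 : rat) ^+ #|T| by rewrite exprn_gt0.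
rewrite -(ler_nat rat) natrD; nra.
Qed.

Local Close Scope ring_scope.

End Balls.

Local Open Scope ring_scope.

Lemma sum_class_average (R : numFieldType) (T : finType) (A : {set T})
    (C : T -> {set T}) (h : T -> R) :
  (forall x, x \in A -> x \in C x) ->
  (forall x y, x \in A -> y \in C x -> y \in A /\ C y = C x) ->
  \sum_(x in A) h x = \sum_(x in A) (\sum_(y in C x) h y) / #|C x|%:R.
Proof.
move=> Cself Ceq.
have CA x : x \in A -> C x \subset A by move=> xA; apply/subsetP=> y /(Ceq _ _ xA)[].
have sum_over x (F : T -> R) : x \in A ->
    \sum_(y in A) (if y \in C x then F y else 0) = \sum_(y in C x) F y.
  move=> xA; rewrite -big_mkcondr; apply: eq_bigl => y.
  exact/andb_idl/subsetP/CA.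
have cardC x : x \in A -> #|C x|%:R != 0 :> R.
  by move=> /Cself xC; rewrite pnatr_eq0 -lt0n card_gt0; apply/set0Pn; exists x.
transitivity (\sum_(y in A) \sum_(x in A)
                (if x \in C y then h y / #|C y|%:R else 0)).
  apply: eq_bigr => y yA; rewrite sum_over // sumr_const -[_ *+ _]mulr_natr divfK //.
  exact: cardC.
rewrite exchange_big; apply: eq_bigr => x xA; rewrite -sum_over // mulr_suml.
apply: eq_bigr => y yA; have [yC|yC] := boolP (y \in C x).
  by have [_ ->] := Ceq _ _ xA yC; rewrite (Cself x xA).
rewrite mul0r; case: ifP => // xC; have [_ Cxy] := Ceq _ _ yA xC.
by case/negP: yC; rewrite Cxy; apply: Cself.
Qed.

Lemma ratio_le (R : realFieldType) (s c a : R) :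
  1 <= c -> c + 2 <= s -> c + 2 <= a -> s / (s - 2) <= a / c.
Proof.
move=> c1 cs ca; rewrite ler_pdivrMr ?subr_gt0 ?(lt_le_trans _ cs) ?ltrDr //.
  by rewrite mulrAC ler_pdivlMr ?(lt_le_trans ltr01) //; nra.
by rewrite (lt_le_trans ltr01 c1).
Qed.

Local Close Scope ring_scope.

Lemma card_setC_le (T : finType) (e : rel T) (S : {set T}) :
  symmetric e -> 3 <= #|T| -> max_deg_le e 3 ->
  (forall u : T, u \notin S -> (3%:Q <= weight e S u)%R) ->
  #|~: S| + 6 <= 3 * #|S|.
Proof.
move=> e_sym n3 e_deg W; have cardT := cardsC S.
have [SC|[x0 x0S]] := set_0Vmem (~: S); first by rewrite SC cards0 in cardT *; lia.
have comp_bound x : x \in ~: S ->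
    #|comp e S x| + 2 <= #|S| /\ #|comp e S x| + 2 <= \sum_(y in comp e S x) Sdeg e S y.
  rewrite inE => xS; have key := card_Sneighb_ball e_sym e_deg xS (W x xS).
  by split; apply: leq_trans key _; [exact/subset_leq_card/subsetIr | exact: card_Sneighb_le_sum].
have c_gt0 x : 0 < #|comp e S x| by rewrite card_gt0; apply/set0Pn; exists x; apply: comp_self.
have s3 : 3 <= #|S| by have [+ _] := comp_bound x0 x0S; have := c_gt0 x0; lia.
set s := #|S| in s3 comp_bound cardT *; set m := #|~: S| in cardT *.
have avg : (m%:R * (s%:R / (s%:R - 2)) <= (s * 3)%:R :> rat)%R.
  rewrite mulr_natl -sumr_const; apply: (@le_trans _ _ (\sum_(x in ~: S)
      (\sum_(y in comp e S x) (Sdeg e S y)%:R) / #|comp e S x|%:R))%R.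
    apply: ler_sum => x xS; have [cs ca] := comp_bound x xS.
    by apply: ratio_le; rewrite ?ler1n -?natr_sum -?natrD ?ler_nat.
  rewrite -(sum_class_average (fun y => (Sdeg e S y)%:R : rat)).
  - by rewrite -natr_sum ler_nat sum_Sdeg_le.
  - by move=> x _; apply: comp_self.
  - by move=> x y; rewrite inE => xS /(comp_eq e_sym xS)[yS ->]; rewrite inE yS.
rewrite -(ler_nat rat) natrD natrM.
have s_gt2 : (2 < s%:R :> rat)%R by rewrite ltr_nat.
move: avg; rewrite mulrA ler_pdivrMr ?subr_gt0 //; nra.
Qed.

Theorem theorem7 (T : finType) (e : rel T) (S : {set T}) :
  simple_graph e -> 3 <= #|T| -> max_deg_le e 3 ->
  (forall u : T, u \notin S -> (3%:Q <= weight e S u)%R) ->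
  ((#|T|%:Q + 6%:Q) / 4%:Q <= #|S|%:Q)%R.
Proof.
move=> [e_sym _] n3 e_deg W; have := card_setC_le e_sym n3 e_deg W.
rewrite -(ler_nat rat) natrD natrM (_ : 6%:Q = 6 :> rat)%R // (_ : 4%:Q = 4 :> rat)%R //.
rewrite -(cardsC S) -!pmulrn natrD.
by move: (#|S|%:R : rat) (#|~: S|%:R : rat) => s m; lra.
Qed.
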